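(* Consider the 1D radiative transfer setting with $x\in(0,1)$, $v\in[-1,1]$, $\langle f\rangle=\frac12\int_{-1}^1f(x,v)\,\mathrm{d}v$, $\mathcal{L}f=\langle f\rangle-f$, Knudsen number $\mathsf{Kn}>0$, a background scattering coefficient $\sigma_{s0}(x)>0$ and absorption coefficient $\sigma_a\equiv0$. Given arbitrary inflow data $\phi_d$ and a boundary point $y\in\{0,1\}$, let $f_0$ solve $$v\,\partial_xf_0=\tfrac1{\mathsf{Kn}}\sigma_{s0}\mathcal{L}f_0-\mathsf{Kn}\,\sigma_af_0,\qquad f_0|_{\Gamma_-}=\phi_d,$$ and let $g$ solve $$-v\,\partial_xg=\tfrac1{\mathsf{Kn}}\sigma_{s0}\mathcal{L}g-\mathsf{Kn}\,\sigma_ag,\qquad g|_{\Gamma_+}=\delta_y(x),$$ and define $\gamma_{\mathsf{Kn}}(x;\delta_y,\phi_d)=\frac1{\mathsf{Kn}}\int g(x,v;\delta_y)\,\mathcal{L}f_0(x,v;\phi_d)\,\mathrm{d}v$. Then $\gamma_{\mathsf{Kn}}$ is a constant independent of $x$.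
   Context: $\Gamma_-=\{(0,v):v>0\}\cup\{(1,v):v<0\}$ and $\Gamma_+=\{(0,v):v<0\}\cup\{(1,v):v>0\}$ are the incoming and outgoing boundary sets. *)

From Stdlib Require Import Reals.
From Coquelicot Require Import Coquelicot.
Open Scope R_scope.

Definition Dom (x v : R) : Prop := 0 < x < 1 /\ -1 <= v <= 1.

Definition jcont (F : R -> R -> R) : Prop :=
  forall x v, Dom x v -> forall eps : R, 0 < eps ->
    exists delta : R, 0 < delta /\
      forall x' v', Dom x' v' -> Rabs (x' - x) < delta -> Rabs (v' - v) < delta ->
        Rabs (F x' v' - F x v) < eps.

Definition avg (F : R -> R -> R) (x : R) : R := / 2 * RInt (fun v => F x v) (-1) 1.

Definition Lop (F : R -> R -> R) (x v : R) : R := avg F x - F x v.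

Definition dx (F : R -> R -> R) (x v : R) : R := Derive (fun y => F y v) x.

(* Classical (strong) solution on (0,1) x [-1,1] of
     s * v * d_x F = (1/Kn) sigma_s L F - Kn sigma_a F,
   with s = 1 (forward equation) or s = -1 (adjoint equation),
   F continuous in x up to the boundary x = 0, 1 for every v. *)
Definition is_RTE_sol (s Kn : R) (sigma_s sigma_a : R -> R) (F : R -> R -> R) : Prop :=
  (forall x v, Dom x v -> ex_derive (fun y => F y v) x) /\
  jcont F /\ jcont (dx F) /\
  (forall x v, 0 <= x <= 1 -> -1 <= v <= 1 ->
     filterlim (fun y => F y v) (within (fun y => 0 <= y <= 1) (locally x))
               (locally (F x v))) /\
  (forall x v, Dom x v ->
     s * v * dx F x v = / Kn * sigma_s x * Lop F x v - Kn * sigma_a x * F x v).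

(* boundary condition on Gamma_- = {(0,v): v>0} U {(1,v): v<0} *)
Definition inflow_bc (F phi : R -> R -> R) : Prop :=
  (forall v, 0 < v <= 1 -> F 0 v = phi 0 v) /\
  (forall v, -1 <= v < 0 -> F 1 v = phi 1 v).

(* boundary condition on Gamma_+ = {(0,v): v<0} U {(1,v): v>0} *)
Definition outflow_bc (F phi : R -> R -> R) : Prop :=
  (forall v, -1 <= v < 0 -> F 0 v = phi 0 v) /\
  (forall v, 0 < v <= 1 -> F 1 v = phi 1 v).

Definition delta_bd (y : R) (x v : R) : R := if Req_EM_T x y then 1 else 0.

Definition gammaKn (Kn : R) (g f0 : R -> R -> R) (x : R) : R :=
  / Kn * RInt (fun v => g x v * Lop f0 x v) (-1) 1.

From Stdlib Require Import Reals Lra.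
From Coquelicot Require Import Coquelicot.
Open Scope R_scope.

(* With sigma_a = 0 and c = sigma_s0 / Kn the two equations read
   c L f0 = v d_x f0 and c L g = - v d_x g, hence pointwise
   d_x g L f0 + d_x f0 L g = (v d_x g d_x f0 - v d_x f0 d_x g) / c = 0.
   Since int g L f0 = 1/2 int f0 int g - int g f0 is symmetric in (f0, g),
   differentiating under the v-integral gives
   (int g L f0)' = int (d_x g L f0 + d_x f0 L g) = 0, so gamma_Kn is constant
   on (0,1). *)

(* Coquelicot's [continuity_2d_pt] is two-sided in [v], so a function given on
   [-1,1] is extended constantly in [v] beyond the endpoints. *)
Definition clamp (v : R) : R := Rmax (-1) (Rmin 1 v).

Definition extend_v (F : R -> R -> R) (x v : R) : R := F x (clamp v).

Lemma clamp_in v : -1 <= clamp v <= 1.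
Proof. unfold clamp, Rmax, Rmin; repeat destruct Rle_dec; lra. Qed.

Lemma clamp_id v : -1 <= v <= 1 -> clamp v = v.
Proof. intros; unfold clamp, Rmax, Rmin; repeat destruct Rle_dec; lra. Qed.

Lemma clamp_lipschitz a b : Rabs (clamp a - clamp b) <= Rabs (a - b).
Proof.
  unfold clamp, Rmax, Rmin; repeat destruct Rle_dec;
  unfold Rabs; repeat destruct Rcase_abs; lra.
Qed.

Lemma extend_v_id F x v : -1 <= v <= 1 -> extend_v F x v = F x v.
Proof. intros Hv; unfold extend_v; rewrite clamp_id; [reflexivity | exact Hv]. Qed.

Lemma RInt_extend_v F x :
  RInt (fun v => extend_v F x v) (-1) 1 = RInt (fun v => F x v) (-1) 1.
Proof.
  apply RInt_ext; intros v Hv; rewrite Rmin_left, Rmax_right in Hv by lra.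
  apply extend_v_id; lra.
Qed.

Lemma locally_open_unit x : 0 < x < 1 -> locally x (fun y => 0 < y < 1).
Proof.
  intros Hx.
  assert (Hm : 0 < Rmin x (1 - x)) by (unfold Rmin; destruct Rle_dec; lra).
  exists (mkposreal _ Hm); simpl; intros y Hy.
  change (Rabs (y - x) < Rmin x (1 - x)) in Hy.
  revert Hy; unfold Rmin, Rabs; repeat destruct Rle_dec; destruct Rcase_abs; intros; lra.
Qed.

Lemma jcont_continuity_2d_pt F x v :
  jcont F -> 0 < x < 1 -> continuity_2d_pt (extend_v F) x v.
Proof.
  intros HF Hx eps.
  destruct (HF x (clamp v) (conj Hx (clamp_in v)) eps (cond_pos eps)) as [d [Hd H]].
  assert (Hm : 0 < Rmin d (Rmin x (1 - x))).
  { unfold Rmin; repeat destruct Rle_dec; lra. }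
  exists (mkposreal _ Hm); simpl; intros u w Hu Hw.
  assert (Hu1 : Rabs (u - x) < d /\ Rabs (u - x) < x /\ Rabs (u - x) < 1 - x).
  { revert Hu; unfold Rmin; repeat destruct Rle_dec; intros; repeat split; lra. }
  destruct Hu1 as [Hud [Hux Hux']].
  apply H; [split; [|apply clamp_in] | exact Hud |].
  - revert Hux Hux'; unfold Rabs; destruct Rcase_abs; intros; lra.
  - eapply Rle_lt_trans; [apply clamp_lipschitz|].
    revert Hw; unfold Rmin; repeat destruct Rle_dec; intros; lra.
Qed.

Lemma continuity_2d_pt_jcont F :
  (forall x v, Dom x v -> continuity_2d_pt (extend_v F) x v) -> jcont F.
Proof.
  intros H x v Hd eps He.
  destruct (H x v Hd (mkposreal _ He)) as [d Hcont].
  exists d; split; [apply cond_pos|].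
  intros x' v' Hd' Hx' Hv'.
  specialize (Hcont x' v' Hx' Hv'); unfold extend_v in Hcont.
  rewrite !clamp_id in Hcont by (destruct Hd, Hd'; tauto).
  exact Hcont.
Qed.

Lemma jcont_mult F G : jcont F -> jcont G -> jcont (fun x v => F x v * G x v).
Proof.
  intros HF HG; apply continuity_2d_pt_jcont; intros x v [Hx _].
  apply (continuity_2d_pt_mult (extend_v F) (extend_v G));
    apply jcont_continuity_2d_pt; auto.
Qed.

Lemma jcont_plus F G : jcont F -> jcont G -> jcont (fun x v => F x v + G x v).
Proof.
  intros HF HG; apply continuity_2d_pt_jcont; intros x v [Hx _].
  apply (continuity_2d_pt_plus (extend_v F) (extend_v G));
    apply jcont_continuity_2d_pt; auto.
Qed.

Lemma jcont_ext F G : (forall x v, Dom x v -> F x v = G x v) -> jcont F -> jcont G.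
Proof.
  intros E HF x v Hd eps He.
  destruct (HF x v Hd eps He) as [d [Hd0 H]]; exists d; split; auto.
  intros x' v' Hd' H1 H2; rewrite <- !E by auto; auto.
Qed.

Lemma jcont_ex_RInt F x : jcont F -> 0 < x < 1 -> ex_RInt (fun v => F x v) (-1) 1.
Proof.
  intros HF Hx.
  apply ex_RInt_ext with (extend_v F x).
  { intros v Hv; rewrite Rmin_left, Rmax_right in Hv by lra; apply extend_v_id; lra. }
  apply (ex_RInt_continuous (V := R_CompleteNormedModule)); intros z _.
  apply filterlim_locally; intros eps.
  destruct (jcont_continuity_2d_pt F x z HF Hx eps) as [d H].
  exists d; intros w Hw; apply H; [|exact Hw].
  rewrite Rminus_eq_0, Rabs_R0; apply cond_pos.
Qed.

Lemma jcont_is_RInt F x :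
  jcont F -> 0 < x < 1 -> is_RInt (fun v => F x v) (-1) 1 (RInt (fun v => F x v) (-1) 1).
Proof. intros; apply (RInt_correct (V := R_CompleteNormedModule)), jcont_ex_RInt; assumption. Qed.

Lemma is_derive_RInt_slice F x :
  (forall x v, Dom x v -> ex_derive (fun y => F y v) x) ->
  jcont F -> jcont (dx F) -> 0 < x < 1 ->
  is_derive (fun y => RInt (fun v => F y v) (-1) 1) x (RInt (fun v => dx F x v) (-1) 1).
Proof.
  intros HFd HF HdF Hx.
  apply is_derive_ext with (fun y => RInt (fun v => extend_v F y v) (-1) 1).
  { intros y; apply RInt_extend_v. }
  rewrite <- RInt_extend_v.
  apply (is_derive_RInt_param (extend_v F) (-1) 1 x).
  - eapply filter_imp; [|apply locally_open_unit; exact Hx].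
    intros y Hy t _; apply HFd; split; [exact Hy | apply clamp_in].
  - intros t _; apply (jcont_continuity_2d_pt (dx F)); auto.
  - eapply filter_imp; [|apply locally_open_unit; exact Hx].
    intros y Hy; apply ex_RInt_ext with (fun v => F y v).
    + intros v Hv; rewrite Rmin_left, Rmax_right in Hv by lra; symmetry; apply extend_v_id; lra.
    + apply jcont_ex_RInt; auto.
Qed.

Lemma is_RInt_mul_Lop F G x IG IGF :
  is_RInt (fun v => G x v) (-1) 1 IG ->
  is_RInt (fun v => G x v * F x v) (-1) 1 IGF ->
  is_RInt (fun v => G x v * Lop F x v) (-1) 1 (avg F x * IG - IGF).
Proof.
  intros HG HGF.
  apply is_RInt_ext with (fun v => minus (scal (avg F x) (G x v)) (G x v * F x v)).
  { intros v _; unfold Lop, minus, plus, opp, scal; simpl; unfold mult; simpl; ring. }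
  exact (is_RInt_minus _ _ _ _ _ _ (is_RInt_scal _ _ _ _ _ HG) HGF).
Qed.

Lemma is_derive_zero_const (f : R -> R) a b :
  (forall x, a < x < b -> is_derive f x 0) ->
  forall x z, a < x < b -> a < z < b -> f x = f z.
Proof.
  intros Hf x z Hx Hz.
  assert (Hin : forall t, Rmin z x <= t <= Rmax z x -> a < t < b).
  { intros t; unfold Rmin, Rmax; destruct Rle_dec; intros; lra. }
  destruct (MVT_gen f z x (fun _ => 0)) as [c [_ Hc]].
  - intros t Ht; apply Hf, Hin; lra.
  - intros t Ht; apply continuity_pt_filterlim.
    apply (ex_derive_continuous (K := R_AbsRing) (V := R_NormedModule)).
    exists 0; apply Hf, Hin; exact Ht.
  - lra.
Qed.

Section Pairing.

Variables F G : R -> R -> R.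
Hypotheses (F_derivable : forall x v, Dom x v -> ex_derive (fun y => F y v) x)
           (F_cont : jcont F) (dF_cont : jcont (dx F))
           (G_derivable : forall x v, Dom x v -> ex_derive (fun y => G y v) x)
           (G_cont : jcont G) (dG_cont : jcont (dx G)).

Lemma dx_mult x v :
  Dom x v -> dx (fun y w => G y w * F y w) x v = dx G x v * F x v + G x v * dx F x v.
Proof.
  intros Hd; exact (Derive_mult (fun y => G y v) (fun y => F y v) x
                      (G_derivable x v Hd) (F_derivable x v Hd)).
Qed.

Lemma is_derive_RInt_mult x : 0 < x < 1 ->
  is_derive (fun y => RInt (fun v => G y v * F y v) (-1) 1) x
    (RInt (fun v => dx G x v * F x v) (-1) 1 + RInt (fun v => dx F x v * G x v) (-1) 1).
Proof.
  intros Hx.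
  set (P := fun y w => G y w * F y w).
  assert (dP_cont : jcont (dx P)).
  { apply jcont_ext with (fun y w => dx G y w * F y w + G y w * dx F y w).
    - intros y w Hd; symmetry; apply dx_mult, Hd.
    - apply jcont_plus; apply jcont_mult; assumption. }
  assert (P_derivable : forall y w, Dom y w -> ex_derive (fun z => P z w) y).
  { intros y w Hd; apply ex_derive_mult; auto. }
  replace (_ + _) with (RInt (fun v => dx P x v) (-1) 1).
  { apply is_derive_RInt_slice; try apply jcont_mult; assumption. }
  apply is_RInt_unique, is_RInt_ext with (fun v => plus (dx G x v * F x v) (dx F x v * G x v)).
  - intros v Hv; rewrite Rmin_left, Rmax_right in Hv by lra.
    unfold P; rewrite (dx_mult x v) by (split; [exact Hx | lra]); unfold plus; simpl; ring.
  - apply (is_RInt_plus (V := R_NormedModule)).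
    + apply (jcont_is_RInt (fun y w => dx G y w * F y w)); [apply jcont_mult|]; assumption.
    + apply (jcont_is_RInt (fun y w => dx F y w * G y w)); [apply jcont_mult|]; assumption.
Qed.

Lemma is_derive_pairing x : 0 < x < 1 ->
  is_derive (fun y => RInt (fun v => G y v * Lop F y v) (-1) 1) x
    (RInt (fun v => dx G x v * Lop F x v + dx F x v * Lop G x v) (-1) 1).
Proof.
  intros Hx.
  assert (Int : forall H, jcont H -> is_RInt (fun v => H x v) (-1) 1 (RInt (fun v => H x v) (-1) 1)).
  { intros H HH; apply jcont_is_RInt; assumption. }
  assert (Etarget : RInt (fun v => dx G x v * Lop F x v + dx F x v * Lop G x v) (-1) 1
    = avg F x * RInt (fun v => dx G x v) (-1) 1 - RInt (fun v => dx G x v * F x v) (-1) 1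
      + (avg G x * RInt (fun v => dx F x v) (-1) 1 - RInt (fun v => dx F x v * G x v) (-1) 1)).
  { exact (is_RInt_unique _ _ _ _
             (is_RInt_plus (V := R_NormedModule) _ _ _ _ _ _
                (is_RInt_mul_Lop F (dx G) x _ _ (Int _ dG_cont)
                   (Int (fun y w => dx G y w * F y w) (jcont_mult _ _ dG_cont F_cont)))
                (is_RInt_mul_Lop G (dx F) x _ _ (Int _ dF_cont)
                   (Int (fun y w => dx F y w * G y w) (jcont_mult _ _ dF_cont G_cont))))). }
  rewrite Etarget.
  apply is_derive_ext_loc with (fun y =>
    minus (mult (avg F y) (RInt (fun v => G y v) (-1) 1)) (RInt (fun v => G y v * F y v) (-1) 1)).
  { eapply filter_imp; [|apply locally_open_unit; exact Hx]; intros y Hy.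
    symmetry; apply is_RInt_unique, is_RInt_mul_Lop.
    - apply jcont_is_RInt; assumption.
    - apply (jcont_is_RInt (fun y w => G y w * F y w)); [apply jcont_mult|]; assumption. }
  pose proof (is_derive_RInt_slice F x F_derivable F_cont dF_cont Hx) as DF.
  pose proof (is_derive_RInt_slice G x G_derivable G_cont dG_cont Hx) as DG.
  assert (D := is_derive_minus _ _ x _ _
                 (is_derive_mult _ _ x _ _ (is_derive_scal _ x (/ 2) _ DF) DG Rmult_comm)
                 (is_derive_RInt_mult x Hx)).
  match type of D with is_derive _ _ ?l =>
    match goal with |- is_derive _ _ ?t => replace t with l; [exact D|] end end.
  unfold minus, plus, opp, mult; simpl; unfold avg; ring.
Qed.

End Pairing.

Lemma dx_Lop_cross_cancel Kn sigma f g x v :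
  0 < Kn -> 0 < sigma x -> Dom x v ->
  is_RTE_sol 1 Kn sigma (fun _ => 0) f ->
  is_RTE_sol (-1) Kn sigma (fun _ => 0) g ->
  dx g x v * Lop f x v + dx f x v * Lop g x v = 0.
Proof.
  intros HKn Hs Hd [_ [_ [_ [_ Hf]]]] [_ [_ [_ [_ Hg]]]].
  specialize (Hf x v Hd); specialize (Hg x v Hd).
  assert (Hc : / Kn * sigma x <> 0).
  { apply Rgt_not_eq, Rmult_lt_0_compat; [apply Rinv_0_lt_compat|]; assumption. }
  apply (Rmult_eq_reg_l (/ Kn * sigma x)); [|exact Hc].
  transitivity (dx g x v * (/ Kn * sigma x * Lop f x v - Kn * 0 * f x v)
                + dx f x v * (/ Kn * sigma x * Lop g x v - Kn * 0 * g x v)); [ring|].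
  rewrite <- Hf, <- Hg; ring.
Qed.

Theorem proposition1 (Kn : R) (sigma_s0 : R -> R) (phi_d : R -> R -> R) (y : R)
  (f0 g : R -> R -> R) :
  0 < Kn ->
  (forall x, 0 <= x <= 1 -> 0 < sigma_s0 x) ->
  (y = 0 \/ y = 1) ->
  is_RTE_sol 1 Kn sigma_s0 (fun _ => 0) f0 ->
  inflow_bc f0 phi_d ->
  is_RTE_sol (-1) Kn sigma_s0 (fun _ => 0) g ->
  outflow_bc g (delta_bd y) ->
  exists c : R, forall x, 0 < x < 1 -> gammaKn Kn g f0 x = c.
Proof.
  intros HKn Hsigma _ Hf0 _ Hg _.
  pose proof Hf0 as [f0_derivable [f0_cont [df0_cont _]]].
  pose proof Hg as [g_derivable [g_cont [dg_cont _]]].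
  assert (Hder : forall x, 0 < x < 1 -> is_derive (gammaKn Kn g f0) x 0).
  { intros x Hx.
    replace 0 with (/ Kn * RInt (fun v => dx g x v * Lop f0 x v + dx f0 x v * Lop g x v) (-1) 1).
    { apply is_derive_scal, is_derive_pairing; assumption. }
    rewrite (RInt_ext _ (fun _ => 0)), RInt_const; [unfold scal; simpl; unfold mult; simpl; ring|].
    intros v Hv; rewrite Rmin_left, Rmax_right in Hv by lra.
    apply (dx_Lop_cross_cancel Kn sigma_s0); [| apply Hsigma; lra | split; [|lra] |..]; assumption. }
  exists (gammaKn Kn g f0 (/ 2)); intros x Hx.
  apply (is_derive_zero_const _ 0 1 Hder); lra.
Qed.
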